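(* Let $\vec{\alpha}=\langle\alpha_s:s\in[\mathbb{N}]^{<\infty}\rangle$ be a sequence of nonstandard hypernatural numbers. Every subset of $[\mathbb{N}]^\infty$ that is open in the $\vec{\alpha}$-Ellentuck topology is $\vec{\alpha}$-Ramsey.
   Context: Setting (Alpha-Theory of Benci–Di Nasso): ZFC together with a new symbol $\alpha$ satisfying: ($\alpha$1) every sequence $\varphi=\langle\varphi_i:i\in\mathbb{N}\rangle$ has a unique ideal value $\varphi[\alpha]$; ($\alpha$2) if $\varphi[\alpha]=\psi[\alpha]$ and $f\circ\varphi$, $f\circ\psi$ make sense then $(f\circ\varphi)[\alpha]=(f\circ\psi)[\alpha]$; ($\alpha$3) constant real sequences $r$ have ideal value $r$, and $\langle i\rangle$ has ideal value $\alpha\notin\mathbb{N}$; ($\alpha$4) if $\vartheta_i=\{\varphi_i,\psi_i\}$ then $\vartheta[\alpha]=\{\varphi[\alpha],\psi[\alpha]\}$; ($\alpha$5) the constant sequence $\emptyset$ has ideal value $\emptyset$, and for nonempty $\psi_i$, $\psi[\alpha]=\{\vartheta[\alpha]:\vartheta_i\in\psi_i\ \forall i\}$. ${}^*A$ is the ideal value of the constant sequence $A$; elements of ${}^*\mathbb{N}\setminus\mathbb{N}$ are nonstandard hypernatural numbers. For finite $s$, $s\sqsubseteq X$ means $s=\{j\in X:j\le i\}$ for some $i$. A tree on $\mathbb{N}$ is a nonempty $T\subseteq[\mathbb{N}]^{<\infty}$ closed under $\sqsubseteq$-initial segments; $[T]=\{X\in[\mathbb{N}]^\infty:$ every finite $s\sqsubseteq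 X$ is in $T\}$; stem $st(T)$ = $\sqsubseteq$-maximal $s\in T$ comparable with all elements of $T$; $T/s=\{t\in T:s\sqsubseteq t\}$. An $\vec{\alpha}$-tree is a tree $T$ with a stem, $T/st(T)\neq\emptyset$, and $s\cup\{\alpha_s\}\in{}^*T$ for all $s\in T/st(T)$. $\mathcal{X}\subseteq[\mathbb{N}]^\infty$ is $\vec{\alpha}$-Ramsey if for every $\vec{\alpha}$-tree $T$ there is an $\vec{\alpha}$-tree $S\subseteq T$ with $st(S)=st(T)$ and $[S]\subseteq\mathcal{X}$ or $[S]\cap\mathcal{X}=\emptyset$. The $\vec{\alpha}$-Ellentuck topology on $[\mathbb{N}]^\infty$ is the topology with basis $\{[T]:T\text{ an }\vec{\alpha}\text{-tree}\}$. *)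

(* Model of Alpha-Theory via its ultrapower
   representation: U = U_alpha = {A : alpha \in *A} is a nonprincipal
   ultrafilter on nat, every hypernatural is phi[alpha] for some phi : nat -> nat,
   and phi[alpha] \in *A  iff  {i | phi i \in A} \in U. *)
From mathcomp Require Import all_boot finmap.
Set Implicit Arguments. Unset Strict Implicit. Unset Printing Implicit Defensive.
Local Open Scope fset_scope.

Definition is_ultrafilter (U : (nat -> Prop) -> Prop) : Prop :=
  [/\ U (fun _ => True), ~ U (fun _ => False),
      (forall A B : nat -> Prop, (forall i, A i -> B i) -> U A -> U B),
      (forall A B : nat -> Prop, U A -> U B -> U (fun i => A i /\ B i)) &
      (forall A : nat -> Prop, U A \/ U (fun i => ~ A i))].

Definition nonprincipal (U : (nat -> Prop) -> Prop) : Prop :=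
  forall n : nat, ~ U (fun i => i = n).

Definition nonstandard (U : (nat -> Prop) -> Prop) (phi : nat -> nat) : Prop :=
  forall n : nat, ~ U (fun i => phi i = n).

Definition infinite_set (X : nat -> Prop) : Prop :=
  forall n, exists m, n <= m /\ X m.

Definition initseg (s : {fset nat}) (X : nat -> Prop) : Prop :=
  (forall j, j \in s -> X j) /\
  (forall j k, X j -> k \in s -> j <= k -> j \in s).

Definition finseg (s t : {fset nat}) : Prop := initseg s (fun j => j \in t).

Definition is_tree (T : {fset nat} -> Prop) : Prop :=
  (exists s, T s) /\ (forall s t, T t -> finseg s t -> T s).

Definition body (T : {fset nat} -> Prop) (X : nat -> Prop) : Prop :=
  infinite_set X /\ forall s : {fset nat}, initseg s X -> T s.

Definition comparable (s t : {fset nat}) : Prop := finseg s t \/ finseg t s.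

Definition is_stem (T : {fset nat} -> Prop) (s : {fset nat}) : Prop :=
  [/\ T s, (forall t, T t -> comparable s t) &
      (forall s', T s' -> (forall t, T t -> comparable s' t) -> finseg s' s)].

(* alpha-vector tree, for alpha_s = (a s)[alpha] *)
Definition alpha_tree (U : (nat -> Prop) -> Prop) (a : {fset nat} -> nat -> nat)
  (T : {fset nat} -> Prop) : Prop :=
  is_tree T /\
  exists st, [/\ is_stem T st,
    (exists t, T t /\ finseg st t) &
    (forall s, T s -> finseg st s -> U (fun i => T (s `|` [fset a s i])))].

Definition alpha_Ramsey (U : (nat -> Prop) -> Prop) (a : {fset nat} -> nat -> nat)
  (O : (nat -> Prop) -> Prop) : Prop :=
  forall T, alpha_tree U a T ->
    exists S, [/\ alpha_tree U a S, (forall s, S s -> T s),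
      (forall st, is_stem T st -> is_stem S st) &
      ((forall X, body S X -> O X) \/ (forall X, body S X -> ~ O X))].

(* open in the alpha-Ellentuck topology: a union of basic sets [T] *)
Definition alpha_open (U : (nat -> Prop) -> Prop) (a : {fset nat} -> nat -> nat)
  (O : (nat -> Prop) -> Prop) : Prop :=
  (forall X, O X -> infinite_set X) /\
  forall X, O X -> exists T, [/\ alpha_tree U a T, body T X &
                                 forall Y, body T Y -> O Y].

(* Call a node [u] of the alpha-tree [T] good if some alpha-subtree of [T] with stem [u]
   has all its branches in [O].  Good nodes glue: if U-almost every successor of [u] is
   good, then so is [u], since the witnessing trees hung above [u] form an alpha-tree.
   So if the stem of [T] is not good, the nodes above it with no good node in between
   form an alpha-subtree [S], and no branch [X] of [S] lies in [O]: openness would give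
   an alpha-tree [T'] with [X] in [[T']] included in [O], and [T] and [T'] intersected
   above a long initial segment of [X] would make that segment good. *)

From Pilot Require Import Defs.
From mathcomp Require Import all_boot finmap.
From Stdlib Require Import Classical ClassicalEpsilon.
Set Implicit Arguments. Unset Strict Implicit. Unset Printing Implicit Defensive.
Local Open Scope fset_scope.

Lemma finseg_refl s : finseg s s.
Proof. by split. Qed.

Lemma finseg_trans s t v : finseg s t -> finseg t v -> finseg s v.
Proof.
move=> [st_t st_seg] [tv tv_seg]; split=> [j /st_t /tv //|j k jv ks jk].
exact: st_seg (tv_seg j k jv (st_t k ks) jk) ks jk.
Qed.

Lemma finseg_anti s t : finseg s t -> finseg t s -> s = t.
Proof. by move=> [st _] [ts _]; apply/fsetP => j; apply/idP/idP => [/st|/ts]. Qed.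

Lemma initseg_comparable s v X : initseg s X -> initseg v X -> Defs.comparable s v.
Proof.
move=> [sX s_seg] [vX v_seg].
have [[x [xs xv]]|sv] := classic (exists x, x \in s /\ x \notin v).
- right; split=> [k kv|j k js kv jk]; last exact: v_seg (sX j js) kv jk.
  have [xk|kx] := leqP x k; last exact: s_seg k x (vX k kv) xs (ltnW kx).
  by rewrite (v_seg x k (sX x xs) kv xk) in xv.
- left; split=> [j js|j k jv ks jk]; last exact: s_seg j k (vX j jv) ks jk.
  by apply: contraT => jv; case: sv; exists j.
Qed.

Lemma finseg_comparable s v t : finseg s t -> finseg v t -> Defs.comparable s v.
Proof. exact: initseg_comparable. Qed.

Definition below (w : {fset nat}) (n : nat) : Prop := forall j, j \in w -> j < n.

Lemma exists_below w : exists m, forall n, m <= n -> below w n.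
Proof.
exists (\max_(j <- enum_fset w) j).+1 => n mn j jw; apply: leq_trans mn.
by rewrite ltnS (@leq_bigmax_seq _ (enum_fset w) xpredT id j jw).
Qed.

Lemma below_notin w n : below w n -> n \notin w.
Proof. by move=> wn; apply/negP => /wn; rewrite ltnn. Qed.

Lemma finseg_fsetU1 u w n : finseg u w -> below w n -> finseg u (w `|` [fset n]).
Proof.
move=> [uw u_seg] wn; split=> [j /uw jw|j k]; first by rewrite in_fsetU jw.
rewrite in_fsetU in_fset1 => /orP[jw|/eqP-> ku]; first exact: u_seg.
by rewrite leqNgt wn // uw.
Qed.

Lemma finseg_fsetU1_cases w v n :
  finseg w v -> finseg v (w `|` [fset n]) -> v = w \/ v = w `|` [fset n].
Proof.
move=> [wv _] [vwn _]; have [nv|nv] := boolP (n \in v).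
- right; apply/fsetP => j; apply/idP/idP => [/vwn //|].
  by rewrite in_fsetU in_fset1 => /orP[/wv|/eqP->].
- left; apply/fsetP => j; apply/idP/idP => [jv|/wv //].
  move: (vwn j jv); rewrite in_fsetU in_fset1 => /orP[//|/eqP jn].
  by rewrite -jn jv in nv.
Qed.

Lemma finseg_fsetU1_inj w n n' s : below w n -> below w n' ->
  finseg (w `|` [fset n]) s -> finseg (w `|` [fset n']) s -> n = n'.
Proof.
move=> wn wn' ns n's.
have mem_last m : m \in w `|` [fset m] by rewrite in_fsetU in_fset1 eqxx orbT.
have [[nn' _]|[n'n _]] := finseg_comparable ns n's.
- by move: (nn' _ (mem_last n)); rewrite in_fsetU in_fset1 (negbTE (below_notin wn)) => /eqP.
- by move: (n'n _ (mem_last n')); rewrite in_fsetU in_fset1 (negbTE (below_notin wn')) => /eqP.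
Qed.

Definition classicb (P : Prop) : bool := if excluded_middle_informative P then true else false.

Lemma classicbP P : classicb P <-> P.
Proof. by rewrite /classicb; case: excluded_middle_informative. Qed.

Definition prefix (X : nat -> Prop) (n : nat) : {fset nat} :=
  seq_fset tt [seq j <- iota 0 n.+1 | classicb (X j)].

Lemma in_prefix X n j : j \in prefix X n <-> X j /\ j <= n.
Proof.
rewrite seq_fsetE mem_filter mem_iota add0n ltnS.
by split=> [/andP[/classicbP]|[/classicbP-> ->]].
Qed.

Lemma mem_prefix X n : X n -> n \in prefix X n.
Proof. by move=> Xn; apply/in_prefix. Qed.

Lemma prefix_initseg X n : initseg (prefix X n) X.
Proof.
split=> [j /in_prefix[] //|j k Xj /in_prefix[_ kn] jk].
by apply/in_prefix; split=> //; apply: leq_trans kn.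
Qed.

Lemma finseg_prefix u X n : initseg u X -> X n -> below u n -> finseg u (prefix X n).
Proof.
move=> uX Xn un; case: (initseg_comparable uX (prefix_initseg X n)) => // [[pu _]].
by move: (below_notin un); rewrite pu // mem_prefix.
Qed.

Lemma initseg_finseg_prefix u X n : finseg u (prefix X n) -> initseg u X.
Proof.
move=> [up u_seg]; split=> [j /up /in_prefix[] //|j k Xj ku jk].
apply: (u_seg j k _ ku jk); have /in_prefix[_ kn] := up k ku.
by apply/in_prefix; split=> //; apply: leq_trans kn.
Qed.

Lemma infinite_below X w : infinite_set X -> exists n, X n /\ below w n.
Proof.
move=> Xinf; have [m wm] := exists_below w; have [n [mn Xn]] := Xinf m.
by exists n; split=> //; apply: wm.
Qed.

Lemma initseg_body T s X :
  (forall t, T t -> Defs.comparable s t) -> body T X -> initseg s X.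
Proof.
move=> s_cmp [Xinf XT]; have [n [Xn sn]] := infinite_below s Xinf.
case: (s_cmp _ (XT _ (prefix_initseg X n))) => [|[ps _]]; first exact: initseg_finseg_prefix.
by move: (below_notin sn); rewrite ps // mem_prefix.
Qed.

Lemma tree_finseg T s t : is_tree T -> T t -> finseg s t -> T s.
Proof. by case=> _ T_seg; apply: T_seg. Qed.

Lemma stem_unique T s s' : is_stem T s -> is_stem T s' -> s = s'.
Proof.
by move=> [Ts s_cmp s_max] [Ts' s'_cmp s'_max]; apply: finseg_anti; [apply: s'_max|apply: s_max].
Qed.

Definition large_above (U : (nat -> Prop) -> Prop) (a : {fset nat} -> nat -> nat)
  (T : {fset nat} -> Prop) (st : {fset nat}) : Prop :=
  forall s, T s -> finseg st s -> U (fun i => T (s `|` [fset a s i])).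

Definition good_tree U a (T : {fset nat} -> Prop) (O : (nat -> Prop) -> Prop)
  (u : {fset nat}) (S : {fset nat} -> Prop) : Prop :=
  [/\ alpha_tree U a S, (forall v, S v -> T v), is_stem S u & forall X, body S X -> O X].

Definition good_node U a (T : {fset nat} -> Prop) (O : (nat -> Prop) -> Prop)
  (u : {fset nat}) : Prop :=
  exists S, good_tree U a T O u S.

Section Ultrafilter.

Variable U : (nat -> Prop) -> Prop.
Hypothesis hU : is_ultrafilter U.

Lemma filterS (A B : nat -> Prop) : U A -> (forall i, A i -> B i) -> U B.
Proof. by case: hU => _ _ mono _ _ UA AB; apply: mono AB UA. Qed.

Lemma filterI (A B : nat -> Prop) : U A -> U B -> U (fun i => A i /\ B i).
Proof. by case: hU => _ _ _ + _; apply. Qed.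

Lemma filter_or_compl (A : nat -> Prop) : U A \/ U (fun i => ~ A i).
Proof. by case: hU. Qed.

Lemma filter_witness (A : nat -> Prop) : U A -> exists i, A i.
Proof.
move=> UA; apply: NNPP => noA; case: hU => _ + _ _ _; apply.
by apply: (filterS UA) => i Ai; apply: noA; exists i.
Qed.

Lemma nonstandard_ge phi : nonstandard U phi -> forall m, U (fun i => m <= phi i).
Proof.
move=> phi_ns; elim=> [|m IHm]; first by case: hU => UT _ _ _ _; apply: (filterS UT).
case: (filter_or_compl (fun i => phi i = m)) => [/phi_ns []|Uneq].
apply: (filterS (filterI IHm Uneq)) => i [mphi /eqP neq].
by rewrite ltn_neqAle eq_sym neq.
Qed.

Lemma nonstandard_below phi : nonstandard U phi -> forall w, U (fun i => below w (phi i)).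
Proof.
move=> phi_ns w; have [m wm] := exists_below w.
by apply: (filterS (nonstandard_ge phi_ns m)) => i /wm.
Qed.

End Ultrafilter.

Definition cone (u : {fset nat}) (P : {fset nat} -> Prop) (v : {fset nat}) : Prop :=
  finseg v u \/ (finseg u v /\ P v).

Section Cone.

Variables (U : (nat -> Prop) -> Prop) (a : {fset nat} -> nat -> nat).
Hypotheses (hU : is_ultrafilter U) (a_ns : forall s, nonstandard U (a s)).
Variables (u : {fset nat}) (P : {fset nat} -> Prop).
Hypothesis Pu : P u.
Hypothesis P_seg : forall v w, P w -> finseg u v -> finseg v w -> P v.
Hypothesis P_large : large_above U a P u.

Lemma cone_tree : is_tree (cone u P).
Proof.
split=> [|s t [tu|[ut Pt]] st]; first by exists u; left; apply: finseg_refl.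
  by left; apply: finseg_trans tu.
have [su|us] := finseg_comparable st ut; first by left.
by right; split=> //; apply: P_seg Pt us st.
Qed.

Lemma large_cone : large_above U a (cone u P) u.
Proof.
move=> s s_in us; have Ps : P s by case: s_in => [su|[]//]; rewrite (finseg_anti su us).
apply: (filterS hU (filterI hU (P_large Ps us) (nonstandard_below hU (@a_ns s) s))).
move=> i [Psi si].
by right; split=> //; apply: finseg_fsetU1.
Qed.

(* A proper extension of [u] in the cone is refuted by a successor of [u] lying above it. *)
Lemma cone_stem : is_stem (cone u P) u.
Proof.
split; [by left; apply: finseg_refl|by move=> t [|[]]; [right|left]|].
move=> s [//|[us Ps]] s_cmp.
have [[x [xs xu]]|su] := classic (exists x, x \in s /\ x \notin u); last first.
  split=> [j js|j k ju _ _]; last exact: (proj1 us j ju).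
  by apply: contraT => ju; case: su; exists j.
have [i [cone_ui si]] := filter_witness hU
  (filterI hU (large_cone (or_introl (finseg_refl u)) (finseg_refl u))
              (nonstandard_below hU (@a_ns u) s)).
have ui_u : below u (a u i) by move=> j /(proj1 us); apply: si.
case: (s_cmp _ cone_ui) => [[s_ui _]|[ui_s _]].
- move: (s_ui x xs); rewrite in_fsetU in_fset1 (negbTE xu) /= => /eqP x_eq.
  by move: (si x xs); rewrite x_eq ltnn.
- have : a u i \in u `|` [fset a u i] by rewrite in_fsetU in_fset1 eqxx orbT.
  by move/ui_s/si; rewrite ltnn.
Qed.

Lemma cone_alpha_tree : alpha_tree U a (cone u P).
Proof.
split; first exact: cone_tree.
exists u; split; [exact: cone_stem| |exact: large_cone].
by exists u; split; [left|]; apply: finseg_refl.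
Qed.

Lemma cone_good_tree (T : {fset nat} -> Prop) (O : (nat -> Prop) -> Prop) :
  is_tree T -> (forall v, P v -> T v) -> (forall X, body (cone u P) X -> O X) ->
  good_tree U a T O u (cone u P).
Proof.
move=> hT PT coneO; split=> //; [exact: cone_alpha_tree| |exact: cone_stem].
by move=> v [vu|[_ /PT//]]; apply: tree_finseg hT (PT _ Pu) vu.
Qed.

Lemma body_cone_prefix X w : body (cone u P) X ->
  exists n, [/\ X n, below w n, finseg u (prefix X n) & P (prefix X n)].
Proof.
move=> X_in; have [_ u_cmp _] := cone_stem; have uX := initseg_body u_cmp X_in.
have [n [Xn uwn]] := infinite_below (u `|` w) (proj1 X_in).
have un : below u n by move=> j ju; apply: uwn; rewrite in_fsetU ju.
exists n; split=> //; first by move=> j jw; apply: uwn; rewrite in_fsetU jw orbT.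
  exact: finseg_prefix.
case: (proj2 X_in _ (prefix_initseg X n)) => [[pu _]|[]//].
by move: (below_notin un); rewrite pu // mem_prefix.
Qed.

End Cone.

Section GoodNodes.

Variables (U : (nat -> Prop) -> Prop) (a : {fset nat} -> nat -> nat).
Hypotheses (hU : is_ultrafilter U) (a_ns : forall s, nonstandard U (a s)).
Variables (T : {fset nat} -> Prop) (O : (nat -> Prop) -> Prop).
Hypothesis hT : is_tree T.

Lemma good_node_meet T' st st' u :
  large_above U a T st -> is_tree T' -> large_above U a T' st' ->
  (forall Y, body T' Y -> O Y) -> T u -> T' u -> finseg st u -> finseg st' u ->
  good_node U a T O u.
Proof.
move=> T_large hT' T'_large T'O Tu T'u stu st'u.
pose P v := T v /\ T' v.
have Pu : P u by [].
have P_seg v w : P w -> finseg u v -> finseg v w -> P v.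
  by move=> [Tw T'w] _ vw; split; [apply: tree_finseg hT Tw vw|apply: tree_finseg hT' T'w vw].
have P_large : large_above U a P u.
  move=> w [Tw T'w] uw; rewrite /P.
  exact: (filterI hU (T_large w Tw (finseg_trans stu uw)) (T'_large w T'w (finseg_trans st'u uw))).
exists (cone u P); apply: (cone_good_tree hU a_ns Pu P_seg P_large hT) => [v []//|Y [Yinf Y_in]].
apply: T'O; split=> // s sY.
by case: (Y_in s sY) => [su|[_ []//]]; apply: tree_finseg hT' T'u su.
Qed.

Section Glue.

Variables (w : {fset nat}) (G : nat -> Prop) (Sf : nat -> {fset nat} -> Prop).
Hypothesis Tw : T w.
Hypothesis G_below : forall y, G y -> below w y.
Hypothesis G_large : U (fun i => G (a w i)).
Hypothesis Sf_good : forall y, G y -> good_tree U a T O (w `|` [fset y]) (Sf y).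

Definition glued (v : {fset nat}) : Prop :=
  v = w \/ exists y, [/\ G y, Sf y v & finseg (w `|` [fset y]) v].

Lemma glued_seg v x : glued x -> finseg w v -> finseg v x -> glued v.
Proof.
move=> [->|[y [Gy Sx yx]]] wv vx; first by left; apply: finseg_anti.
have [[[_ Sy_seg] _] _ [Sy_root _ _] _] := Sf_good Gy.
have [vy|yv] := finseg_comparable vx yx; last by right; exists y; split=> //; apply: Sy_seg Sx vx.
case: (finseg_fsetU1_cases wv vy) => ->; first by left.
by right; exists y; split=> //; apply: finseg_refl.
Qed.

Lemma glued_large : large_above U a glued w.
Proof.
move=> v [->|[y [Gy Sv yv]]] wv.
  apply: (filterS hU G_large) => i Gi; right; exists (a w i); split=> //.
  by have [_ _ [] ] := Sf_good Gi.
have [[_ [st [st_stem _ Sy_large]]] _ Sy_stem _] := Sf_good Gy.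
rewrite (stem_unique st_stem Sy_stem) in Sy_large.
apply: (filterS hU (filterI hU (Sy_large v Sv yv) (nonstandard_below hU (@a_ns v) v))).
by move=> i [Svi vi]; right; exists y; split=> //; apply: finseg_fsetU1.
Qed.

(* A branch through the glued tree passes through a unique successor [w `|` [fset y]]
   of [w] and then stays in the tree [Sf y]. *)
Lemma body_glued X : body (cone w glued) X -> O X.
Proof.
move=> X_in; have [X_inf X_cone] := X_in.
have [n [Xn wn wp [pw|[y [Gy Sp yp]]]]] :=
  body_cone_prefix hU a_ns (or_introl erefl) glued_large w X_in.
  by move: (below_notin wn); rewrite -pw mem_prefix.
have [[[_ Sy_seg] _] _ _ SyO] := Sf_good Gy.
apply: SyO; split=> // s sX.
have [sp|ps] := initseg_comparable sX (prefix_initseg X n); first exact: Sy_seg Sp sp.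
case: (X_cone s sX) => [sw|[_ [sw|[y' [Gy' Sy's y's]]]]].
- exact: Sy_seg Sp (finseg_trans sw wp).
- by rewrite sw; apply: Sy_seg Sp wp.
- by rewrite (finseg_fsetU1_inj (G_below Gy) (G_below Gy') (finseg_trans yp ps) y's).
Qed.

Lemma good_node_glued : good_node U a T O w.
Proof.
have glued_w : glued w by left.
exists (cone w glued).
apply: (cone_good_tree hU a_ns glued_w glued_seg glued_large hT) => [v [->//|[y [Gy Sv _]]]|].
  by have [_ SyT _ _] := Sf_good Gy; apply: SyT.
exact: body_glued.
Qed.

End Glue.

Lemma good_node_large_succ w :
  T w -> U (fun i => good_node U a T O (w `|` [fset a w i])) -> good_node U a T O w.
Proof.
move=> Tw good_succ.
pose G y := good_node U a T O (w `|` [fset y]) /\ below w y.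
pose Sf y := epsilon (inhabits (fun _ => True)) (good_tree U a T O (w `|` [fset y])).
apply: (@good_node_glued w G Sf) => //; first by move=> y [].
  exact: (filterI hU good_succ (nonstandard_below hU (@a_ns w) w)).
by move=> y [[S S_good] _]; apply: epsilon_spec; exists S.
Qed.

Section Dichotomy.

Variable st : {fset nat}.
Hypothesis T_large : large_above U a T st.

Definition nowhere_good (w : {fset nat}) : Prop :=
  T w /\ forall v, finseg st v -> finseg v w -> ~ good_node U a T O v.

Lemma nowhere_good_seg v w : nowhere_good w -> finseg st v -> finseg v w -> nowhere_good v.
Proof.
move=> [Tw w_bad] stv vw; split=> [|x stx xv]; first exact: tree_finseg hT Tw vw.
exact: w_bad stx (finseg_trans xv vw).
Qed.

(* Contrapositive of [good_node_large_succ]. *)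
Lemma nowhere_good_large : large_above U a nowhere_good st.
Proof.
move=> w [Tw w_bad] stw.
have w_not_good : ~ good_node U a T O w by apply: w_bad stw (finseg_refl w).
have [/(good_node_large_succ Tw)//|succ_bad] :=
  filter_or_compl hU (fun i => good_node U a T O (w `|` [fset a w i])).
have succ_below := nonstandard_below hU (@a_ns w) w.
apply: (filterS hU (filterI hU (filterI hU (T_large Tw stw) succ_bad) succ_below)).
move=> i [[Twi wi_bad] wi]; split=> // v stv vwi.
have [vw|wv] := finseg_comparable vwi (finseg_fsetU1 (finseg_refl w) wi); first exact: w_bad stv vw.
by case: (finseg_fsetU1_cases wv vwi) => ->.
Qed.

Lemma nowhere_good_tree : alpha_open U a O -> nowhere_good st ->
  good_tree U a T (fun X => ~ O X) st (cone st nowhere_good).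
Proof.
move=> [_ O_open] st_bad.
apply: (cone_good_tree hU a_ns st_bad nowhere_good_seg nowhere_good_large hT) => [v []//|X X_in OX].
have [T' [[hT' [st' [[_ st'_cmp _] _ T'_large]]] XT' T'O]] := O_open X OX.
have [n [Xn st'n stp [Tp p_bad]]] :=
  body_cone_prefix hU a_ns st_bad nowhere_good_large st' X_in.
apply: (p_bad _ stp (finseg_refl _)).
apply: good_node_meet T_large hT' T'_large T'O Tp _ stp _.
  by case: XT' => _; apply; apply: prefix_initseg.
exact: finseg_prefix (initseg_body st'_cmp XT') Xn st'n.
Qed.

End Dichotomy.

End GoodNodes.

Theorem mainTheorem20 (U : (nat -> Prop) -> Prop) (a : {fset nat} -> nat -> nat)
  (O : (nat -> Prop) -> Prop) :
  is_ultrafilter U -> nonprincipal U ->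
  (forall s, nonstandard U (a s)) ->
  alpha_open U a O -> alpha_Ramsey U a O.
Proof.
move=> hU _ a_ns O_open T [hT [st [T_stem _ T_large]]].
have [Tst _ _] := T_stem.
have Ramsey_witness O' S : good_tree U a T O' st S ->
    [/\ alpha_tree U a S, (forall s, S s -> T s),
        (forall st', is_stem T st' -> is_stem S st') & forall X, body S X -> O' X].
  by move=> [S_tree ST S_stem SO']; split=> // st' /(stem_unique T_stem) <-.
have [[S /Ramsey_witness[S_tree ST S_stem SO]]|st_bad] := classic (good_node U a T O st).
  by exists S; split=> //; left.
have st_nowhere : nowhere_good U a T O st st.
  by split=> // v stv vst; rewrite (finseg_anti vst stv).
have /Ramsey_witness[S_tree ST S_stem SnotO] :=
  nowhere_good_tree hU a_ns hT T_large O_open st_nowhere.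
by exists (cone st (nowhere_good U a T O st)); split=> //; right.
Qed.
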